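(* Let $k,d,r,\delta$ be positive integers with $\delta\le d$, $r \ge 1$, and suppose there exists a systematic $[k+d-1,k,d]$ MDS code over $\mathbb{F}_q$. Then there exists an $(r,\delta)_i$ linear code over $\mathbb{F}_q$ of length $n = k+d-1+\left(\lceil k/r\rceil-1\right)(\delta-1)$, dimension $k$ and minimum distance $d$, i.e. an $(r,\delta)_i$ code attaining $d = n-k+1-\left(\lceil k/r\rceil-1\right)(\delta-1)$ with equality.
   Context: Coordinate $i$ of a linear code $\mathcal{C}$ of length $n$ has locality $(r,\delta)$ if there is $S_i\subseteq[n]$ with $i\in S_i$, $|S_i|\le r+\delta-1$, such that the punctured code $\mathcal{C}|_{S_i}$ (delete coordinates outside $S_i$) has minimum distance at least $\delta$. An $(r,\delta)_i$ code is a systematic $[n,k,d]$ linear code (information symbols in the first $k$ coordinates) in which all $k$ information coordinates have locality $(r,\delta)$. An MDS code is an $[N,K,D]$ code with $D=N-K+1$. *)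

(* Linear codes over a finite field F are given by generator
   matrices G : 'M[F]_(k, n); the code is the row space of G. *)
From HB Require Import structures.
From mathcomp Require Import all_boot all_order all_algebra.
Set Implicit Arguments. Unset Strict Implicit. Unset Printing Implicit Defensive.
Import GRing.Theory.
Local Open Scope ring_scope.

Definition wt (F : fieldType) (n : nat) (c : 'rV[F]_n) : nat :=
  #|[set j : 'I_n | c 0%R j != 0%R]|.

Definition codeword (F : fieldType) (k n : nat) (G : 'M[F]_(k, n)) (c : 'rV[F]_n) : Prop :=
  (c <= G)%MS.

Definition has_min_dist (F : fieldType) (k n : nat) (G : 'M[F]_(k, n)) (d : nat) : Prop :=
  (exists c, codeword G c /\ c != 0 /\ wt c = d) /\
  (forall c, codeword G c -> c != 0 -> (d <= wt c)%N).

Definition systematic (F : fieldType) (k n : nat) (G : 'M[F]_(k, n)) : Prop :=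
  forall (i : 'I_k) (j : 'I_n), (j < k)%N -> G i j = ((i : nat) == (j : nat))%:R.

(* Coordinate i has locality (r, delta): there is S containing i with
   |S| <= r + delta - 1 such that the punctured code C|_S has minimum distance
   at least delta (every nonzero codeword of C|_S has weight >= delta). *)
Definition has_locality (F : fieldType) (k n : nat) (G : 'M[F]_(k, n))
    (r delta : nat) (i : 'I_n) : Prop :=
  exists S : {set 'I_n},
    [/\ i \in S, (#|S| <= r + delta - 1)%N &
        forall c, codeword G c -> (exists2 j, j \in S & c 0%R j != 0%R) ->
          (delta <= #|[set j in S | c 0%R j != 0%R]|)%N].

Definition systematic_code (F : fieldType) (k n : nat) (G : 'M[F]_(k, n)) (d : nat) : Prop :=
  [/\ row_free G, systematic G & has_min_dist G d].

Definition rdelta_i_code (F : fieldType) (k n : nat) (G : 'M[F]_(k, n))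
    (d r delta : nat) : Prop :=
  systematic_code G d /\
  forall i : 'I_n, (i < k)%N -> has_locality G r delta i.

Definition ceil_div (k r : nat) : nat := ((k + r.-1) %/ r)%N.

From HB Require Import structures.
From mathcomp Require Import all_boot all_order all_algebra.
From mathcomp Require Import zify.
Set Implicit Arguments. Unset Strict Implicit. Unset Printing Implicit Defensive.
Import GRing.Theory.

(* Group the information symbols into m = ceil(k / r) groups of at most r
   consecutive symbols, and take a systematic [k + d - 1, k, d] MDS code. Each
   of its first delta - 1 parity columns is replaced by m columns, the t-th of
   which keeps only the entries of the rows of group t. The new columns of one
   old column sum to it, so every nonzero codeword is at least as heavy as the
   MDS codeword it comes from (distance >= d), while a generator row keeps its
   weight d. For an information symbol of group t, the r information
   coordinates of group t and the t-th copies of the split columns form a set of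
   size <= r + delta - 1 on which any codeword agrees with the MDS codeword
   generated by its group-t part; the latter has weight >= d, of which at most
   d - delta lies on the unsplit parity columns, leaving >= delta nonzero
   coordinates in the set. *)

Lemma card_le_interval n (A : {set 'I_n}) a l :
  (forall j : 'I_n, j \in A -> a <= j < a + l) -> #|A| <= l.
Proof.
move=> hA; rewrite cardE -(size_map val) -(size_iota a l).
apply: uniq_leq_size => [|_ /mapP[j jA ->]].
  by rewrite (map_inj_uniq val_inj) enum_uniq.
by rewrite mem_iota; apply: hA; rewrite -mem_enum.
Qed.

Section Systematic.
Variables (F : fieldType) (k n : nat) (G : 'M[F]_(k, n)).
Local Open Scope ring_scope.
Hypothesis sysG : systematic G.

Lemma systematic_mul_info (u : 'rV[F]_k) (j : 'I_n) (jk : (j < k)%N) :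
  (u *m G) 0 j = u 0 (Ordinal jk).
Proof.
rewrite mxE (bigD1 (Ordinal jk)) //= sysG // eqxx mulr1 big1 ?addr0 // => i ij.
by rewrite sysG // (negbTE (ij : (i : nat) != j)) mulr0.
Qed.

Lemma systematic_row_free : (k <= n)%N -> row_free G.
Proof.
move=> kn; apply: inj_row_free => u uG0; apply/rowP => i; rewrite mxE.
have := @systematic_mul_info u (widen_ord kn i) (ltn_ord i).
by rewrite uG0 mxE => ->; congr (u 0 _); apply: val_inj.
Qed.

Lemma wt_row_systematic i : (wt (row i G) <= (n - k).+1)%N.
Proof.
rewrite /wt -(cardsID [set j : 'I_n | (k <= j)%N]) -[(n - k).+1]addn1 leq_add //; last first.
  apply: (@leq_trans #|[set j : 'I_n | (j : nat) == i]|).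
    apply/subset_leq_card/subsetP => j; rewrite !inE mxE -ltnNge.
    case/andP=> jk; rewrite sysG //.
    by case: (eqVneq (i : nat) j); rewrite ?mulr0n ?eqxx.
  by apply: (@card_le_interval _ _ i 1) => j; rewrite inE => /eqP ->; lia.
apply: (@card_le_interval _ _ k (n - k)) => j; rewrite !inE => /andP[_ kj]; have := ltn_ord j; lia.
Qed.

End Systematic.

(* Column splitting: coordinate j of the new code is a copy of coordinate
   [src j] of the code generated by G in which only the rows i with [keep i j]
   survive. The hypotheses say that, for every row i, each old coordinate o
   has exactly one copy [copy i o] keeping row i. *)
Section ColumnSplitting.
Variables (F : fieldType) (k n0 n : nat) (G : 'M[F]_(k, n0)).
Variables (src : 'I_n -> 'I_n0) (keep : 'I_k -> 'I_n -> bool) (copy : 'I_k -> 'I_n0 -> 'I_n).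
Hypothesis src_copy : forall i o, src (copy i o) = o.
Hypothesis keep_copy : forall i o, keep i (copy i o).
Hypothesis copy_src : forall i j, keep i j -> copy i (src j) = j.
Local Open Scope ring_scope.

Definition split_mx : 'M[F]_(k, n) :=
  \matrix_(i, j) (if keep i j then G i (src j) else 0).

Lemma keep_srcE i o j : (src j == o) && keep i j = (j == copy i o).
Proof.
apply/andP/eqP => [[/eqP <- /copy_src //]|->].
by rewrite src_copy keep_copy.
Qed.

Lemma split_mx_col_sum i o : \sum_(j | src j == o) split_mx i j = G i o.
Proof.
rewrite (eq_bigr (fun j => if keep i j then G i o else 0)) => [|j /eqP <-]; last by rewrite mxE.
rewrite -big_mkcondr (eq_bigl (pred1 (copy i o))) ?big_pred1_eq // => j.
exact: keep_srcE.
Qed.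

Lemma mul_split_mx_sum (u : 'rV[F]_k) o :
  (u *m G) 0 o = \sum_(j | src j == o) (u *m split_mx) 0 j.
Proof.
under [RHS]eq_bigr do rewrite mxE.
rewrite mxE exchange_big; apply: eq_bigr => i _.
by rewrite -mulr_sumr split_mx_col_sum.
Qed.

Lemma wt_mul_split_mx (u : 'rV[F]_k) : (wt (u *m G) <= wt (u *m split_mx))%N.
Proof.
apply: leq_trans (leq_imset_card src _); apply/subset_leq_card/subsetP => o.
rewrite inE mul_split_mx_sum => nz.
have [j /andP[/eqP <- cj] | none] :=
  pickP [pred j | (src j == o) && ((u *m split_mx) 0 j != 0)].
  by apply: imset_f; rewrite inE.
move: nz; rewrite big1 ?eqxx // => j colj; apply/eqP.
by move: (none j); rewrite /= colj => /negbFE.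
Qed.

Lemma wt_row_split_mx i : wt (row i split_mx) = wt (row i G).
Proof.
rewrite /wt -[in RHS](card_imset _ (can_inj (src_copy i))).
apply: eq_card => j; rewrite inE mxE mxE; apply/idP/imsetP => [|[o]].
  case: ifP => [kij nz|]; last by rewrite eqxx.
  by exists (src j); rewrite ?inE ?mxE ?copy_src.
by rewrite inE mxE => nz ->; rewrite keep_copy src_copy.
Qed.

Definition restrict_row (P : pred 'I_k) (u : 'rV[F]_k) : 'rV[F]_k :=
  \row_i (if P i then u 0 i else 0).

Lemma mul_split_mx_restrict (P : pred 'I_k) (u : 'rV[F]_k) j :
  (forall i, G i (src j) != 0 -> keep i j = P i) ->
  (u *m split_mx) 0 j = (restrict_row P u *m G) 0 (src j).
Proof.
move=> hj; rewrite !mxE; apply: eq_bigr => i _; rewrite /restrict_row !mxE.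
have [->|nz] := eqVneq (G i (src j)) 0; first by rewrite if_same !mulr0.
by rewrite hj //; case: ifP; rewrite ?mul0r ?mulr0.
Qed.

End ColumnSplitting.

Lemma ceil_div_mul_ge k r : 0 < r -> k <= ceil_div k r * r.
Proof.
rewrite /ceil_div => r_gt0.
by have := divn_eq (k + r.-1) r; have := ltn_pmod (k + r.-1) r_gt0; lia.
Qed.

Lemma block_offset a x e : a < e -> (x * e + a) %/ e = x /\ (x * e + a) %% e = a.
Proof.
move=> ae; have e_gt0 : 0 < e by apply: leq_ltn_trans ae.
by rewrite divnMDl // modnMDl divn_small // modn_small // addn0.
Qed.

Section LocalGroups.
Variables k d r delta : nat.
Hypotheses (k_gt0 : 0 < k) (d_gt0 : 0 < d) (r_gt0 : 0 < r) (delta_gt0 : 0 < delta).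
Hypothesis delta_le_d : delta <= d.
Local Notation e := (delta - 1).
Local Notation m := (ceil_div k r).
Local Notation n0 := (k + d - 1).
Local Notation n := (k + d - 1 + (ceil_div k r - 1) * (delta - 1)).

(* Layout of the n coordinates: [0, k) are the information symbols, block t
   of [k, k + m * e) (of length e) copies the parity coordinates [k, k + e) of
   the MDS code for the rows i with i %/ r = t, and [k + m * e, n) copies the
   remaining parity coordinates [k + e, n0). *)
Definition src_nat j :=
  if j < k then j else if j < k + m * e then k + (j - k) %% e else j - (m - 1) * e.
Definition keep_nat i j :=
  if k <= j < k + m * e then i %/ r == (j - k) %/ e else true.
Definition copy_nat i o :=
  if o < k then o else if o < k + e then o + i %/ r * e else o + (m - 1) * e.

Lemma ceil_div_gt0 : 0 < m.
Proof. by have := ceil_div_mul_ge k r_gt0; nia. Qed.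

Lemma group_lt i : i < k -> i %/ r < m.
Proof. by have := ceil_div_mul_ge k r_gt0; rewrite ltn_divLR //; lia. Qed.

Lemma ceil_div_predE : (m - 1) * e + e = m * e.
Proof. by rewrite mulnBl mul1n subnK // leq_pmull // ceil_div_gt0. Qed.

Lemma copy_nat_info i o : o < k -> copy_nat i o = o.
Proof. by rewrite /copy_nat => ->. Qed.

Lemma copy_nat_block i o : k <= o < k + e -> copy_nat i o = k + (i %/ r * e + (o - k)).
Proof. by case/andP=> ko oe; rewrite /copy_nat ltnNge ko oe /=; lia. Qed.

Lemma copy_nat_tail i o : k + e <= o -> copy_nat i o = o + (m - 1) * e.
Proof. by move=> eo; rewrite /copy_nat ltnNge (leq_trans (leq_addr _ _) eo) ltnNge eo. Qed.

Lemma src_nat_info j : j < k -> src_nat j = j.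
Proof. by rewrite /src_nat => ->. Qed.

Lemma src_nat_block j : k <= j < k + m * e -> src_nat j = k + (j - k) %% e.
Proof. by case/andP=> kj je; rewrite /src_nat ltnNge kj je. Qed.

Lemma src_nat_tail j : k + m * e <= j -> src_nat j = j - (m - 1) * e.
Proof. by move=> ej; rewrite /src_nat ltnNge (leq_trans (leq_addr _ _) ej) ltnNge ej. Qed.

Lemma keep_nat_block i j : k <= j < k + m * e -> keep_nat i j = (i %/ r == (j - k) %/ e).
Proof. by rewrite /keep_nat => ->. Qed.

Lemma keep_nat_out i j : ~~ (k <= j < k + m * e) -> keep_nat i j.
Proof. by rewrite /keep_nat => /negbTE ->. Qed.

Lemma src_nat_lt j : j < n -> src_nat j < n0.
Proof.
move=> jn; have m_gt0 := ceil_div_gt0; have shift := ceil_div_predE.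
have [jk|kj] := ltnP j k; first by rewrite src_nat_info //; lia.
have [jb|bj] := ltnP j (k + m * e); last by rewrite src_nat_tail //; nia.
have e_gt0 : 0 < e by nia.
by rewrite src_nat_block ?kj //; have := ltn_pmod (j - k) e_gt0; lia.
Qed.

Lemma copy_nat_lt i o : i < k -> o < n0 -> copy_nat i o < n.
Proof.
move=> ik on; have := group_lt ik; have shift := ceil_div_predE.
have [ok|ko] := ltnP o k; first by rewrite copy_nat_info //; nia.
have [oe|eo] := ltnP o (k + e); last by rewrite copy_nat_tail //; nia.
by rewrite copy_nat_block ?ko //; move: (i %/ r) => g; nia.
Qed.

Lemma src_copy_nat i o : i < k -> o < n0 -> src_nat (copy_nat i o) = o.
Proof.
move=> ik on; have m_gt0 := ceil_div_gt0; have shift := ceil_div_predE.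
have [ok|ko] := ltnP o k; first by rewrite copy_nat_info ?src_nat_info.
have [oe|eo] := ltnP o (k + e); last by rewrite copy_nat_tail // src_nat_tail; nia.
rewrite copy_nat_block ?ko ?oe //; have := group_lt ik; move: (i %/ r) => g gm.
have [_ hmod] := @block_offset (o - k) g e ltac:(lia).
by rewrite src_nat_block ?addKn ?hmod //; nia.
Qed.

Lemma keep_copy_nat i o : i < k -> o < n0 -> keep_nat i (copy_nat i o).
Proof.
move=> ik on; have m_gt0 := ceil_div_gt0; have shift := ceil_div_predE.
have [ok|ko] := ltnP o k.
  by rewrite copy_nat_info // keep_nat_out // negb_and -ltnNge ok.
have [oe|eo] := ltnP o (k + e); last by rewrite copy_nat_tail // keep_nat_out //; nia.
have oblock : k <= o < k + e by rewrite ko oe.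
have jblock : k <= copy_nat i o < k + m * e.
  by rewrite (copy_nat_block _ oblock); have := group_lt ik; move: (i %/ r) => g; nia.
rewrite (keep_nat_block _ jblock) (copy_nat_block _ oblock) addKn.
by have [-> _] := @block_offset (o - k) (i %/ r) e ltac:(lia).
Qed.

Lemma copy_src_nat i j : i < k -> j < n -> keep_nat i j -> copy_nat i (src_nat j) = j.
Proof.
move=> ik jn; have m_gt0 := ceil_div_gt0; have shift := ceil_div_predE.
have [jk|kj] := ltnP j k; first by rewrite src_nat_info ?copy_nat_info.
have [jb|bj] := ltnP j (k + m * e); last by rewrite src_nat_tail // copy_nat_tail; nia.
have jblock : k <= j < k + m * e by rewrite kj jb.
have e_gt0 : 0 < e by nia.
have := ltn_pmod (j - k) e_gt0; have := divn_eq (j - k) e.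
rewrite (keep_nat_block _ jblock) (src_nat_block jblock) => hdiv hmod /eqP gq.
by rewrite copy_nat_block ?gq; lia.
Qed.

Definition in_group g j :=
  if j < k then j %/ r == g else (j < k + m * e) && ((j - k) %/ e == g).

Lemma card_group g : #|[set j : 'I_n | in_group g j]| <= r + delta - 1.
Proof.
rewrite -(cardsID [set j : 'I_n | j < k]) (_ : r + delta - 1 = r + e); last by lia.
apply: leq_add.
  apply: (@card_le_interval _ _ (g * r) r) => j; rewrite !inE /in_group.
  by case/andP=> + jk; rewrite jk => /eqP jg; lia.
apply: (@card_le_interval _ _ (k + g * e) e) => j; rewrite !inE /in_group -leqNgt.
case/andP=> kj; rewrite ltnNge kj /= => /andP[jb /eqP jg].
have e_gt0 : 0 < e by nia.
by have := ltn_pmod (j - k) e_gt0; have := divn_eq (j - k) e; rewrite jg; lia.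
Qed.

Lemma keep_nat_group g i j : in_group g j -> k <= j -> keep_nat i j = (i %/ r == g).
Proof.
move=> + kj; rewrite /in_group ltnNge kj /= => /andP[jb /eqP jg].
by rewrite keep_nat_block ?jg ?kj.
Qed.

Lemma copy_nat_group i o : i < k -> o < k + e -> (o < k -> o %/ r = i %/ r) ->
  in_group (i %/ r) (copy_nat i o).
Proof.
move=> ik oe og; have gm := group_lt ik; have shift := ceil_div_predE.
rewrite /in_group; have [ok|ko] := ltnP o k; first by rewrite copy_nat_info ?ok ?og.
have oblock : k <= o < k + e by rewrite ko oe.
rewrite (copy_nat_block _ oblock) ltnNge leq_addr /= addKn.
have [-> _] := @block_offset (o - k) (i %/ r) e ltac:(lia).
by move: (i %/ r) gm => g; nia.
Qed.

Lemma k_le_n0 : k <= n0.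
Proof. by lia. Qed.

Lemma k_le_n : k <= n.
Proof. exact: leq_trans k_le_n0 (leq_addr _ _). Qed.

Definition src_ord (j : 'I_n) : 'I_n0 := Ordinal (src_nat_lt (ltn_ord j)).
Definition copy_ord (i : 'I_k) (o : 'I_n0) : 'I_n :=
  Ordinal (copy_nat_lt (ltn_ord i) (ltn_ord o)).
Definition keep_ord (i : 'I_k) (j : 'I_n) := keep_nat i j.

Lemma src_copy_ord i o : src_ord (copy_ord i o) = o.
Proof. by apply: val_inj; rewrite /= src_copy_nat. Qed.

Lemma keep_copy_ord i o : keep_ord i (copy_ord i o).
Proof. exact: keep_copy_nat. Qed.

Lemma copy_src_ord i j : keep_ord i j -> copy_ord i (src_ord j) = j.
Proof. by move=> kij; apply: val_inj; rewrite /= copy_src_nat. Qed.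

Section Construction.
Variables (F : fieldType) (G0 : 'M[F]_(k, n0)).
Hypothesis sysG0 : systematic G0.
Hypothesis G0_wt : forall c, codeword G0 c -> c != 0%R -> d <= wt c.
Local Open Scope ring_scope.

Definition lrc_mx : 'M[F]_(k, n) := split_mx G0 src_ord keep_ord.

Lemma lrc_mx_info i (j : 'I_n) : (j < k)%N -> lrc_mx i j = ((i : nat) == j)%:R.
Proof.
move=> jk; rewrite mxE /keep_ord keep_nat_out; last by rewrite negb_and -ltnNge jk.
by rewrite sysG0 //= src_nat_info.
Qed.

Lemma lrc_mx_systematic : systematic lrc_mx.
Proof. by move=> i j; apply: lrc_mx_info. Qed.

Lemma lrc_mx_wt c : codeword lrc_mx c -> c != 0 -> (d <= wt c)%N.
Proof.
move=> /submxP[u ->] uG_neq0.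
apply: leq_trans _ (wt_mul_split_mx G0 src_copy_ord keep_copy_ord copy_src_ord u).
apply: G0_wt; first exact: submxMl.
rewrite mulmx_free_eq0 ?systematic_row_free ?k_le_n0 //.
by apply: contraNneq uG_neq0 => ->; rewrite mul0mx.
Qed.

Lemma lrc_mx_min_dist : has_min_dist lrc_mx d.
Proof.
pose i0 : 'I_k := Ordinal k_gt0.
have row_neq0 : row i0 lrc_mx != 0.
  apply/eqP => /rowP/(_ (widen_ord k_le_n i0)).
  by rewrite mxE lrc_mx_info // mxE eqxx; apply/eqP; rewrite oner_eq0.
split; last exact: lrc_mx_wt.
exists (row i0 lrc_mx); split; first exact: row_sub.
split=> //; apply/eqP; rewrite eqn_leq (lrc_mx_wt (row_sub _ _) row_neq0) andbT.
rewrite (wt_row_split_mx G0 src_copy_ord keep_copy_ord copy_src_ord).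
by have := wt_row_systematic sysG0 i0; lia.
Qed.

Lemma mul_lrc_mx_group (u : 'rV[F]_k) g (j : 'I_n) : in_group g j ->
  (u *m lrc_mx) 0 j =
  (restrict_row (fun i : 'I_k => i %/ r == g)%N u *m G0) 0 (src_ord j).
Proof.
move=> jg; apply: mul_split_mx_restrict => i.
have [jk|kj] := ltnP j k; last by rewrite /keep_ord (keep_nat_group i jg kj).
move: jg; rewrite /in_group jk /keep_ord keep_nat_out; last by rewrite negb_and -ltnNge jk.
have srcj : src_nat j = j := src_nat_info jk.
rewrite sysG0 /= srcj // => /eqP jg.
by have [->|] := eqVneq (i : nat) j; rewrite ?jg ?eqxx // mulr0n eqxx.
Qed.

Lemma lrc_mx_locality (i : 'I_n) : (i < k)%N -> has_locality lrc_mx r delta i.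
Proof.
move=> ik; pose i' : 'I_k := Ordinal ik; pose g := (i %/ r)%N.
pose S := [set j : 'I_n | in_group g j].
exists S; split; [by rewrite inE /in_group ik | exact: card_group |].
move=> _ /submxP[u ->] [j0 j0S cj0].
pose v := restrict_row (fun i0 : 'I_k => i0 %/ r == g)%N u.
have cE j : j \in S -> (u *m lrc_mx) 0 j = (v *m G0) 0 (src_ord j).
  by rewrite inE; apply: mul_lrc_mx_group.
have w_neq0 : v *m G0 != 0 by apply: contraNneq cj0 => w0; rewrite cE // w0 mxE.
have := G0_wt (submxMl v G0) w_neq0.
rewrite /wt; set W := [set o | (v *m G0) 0 o != 0].
rewrite -(cardsID [set o : 'I_n0 | (o < k + e)%N]).
have tail_wt : (#|W :\: [set o : 'I_n0 | (o < k + e)%N]| <= d - delta)%N.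
  apply: (@card_le_interval _ _ (k + e) (d - delta)) => o; rewrite !inE -leqNgt.
  by case/andP=> eo _; have := ltn_ord o; lia.
have front_wt : (#|W :&: [set o : 'I_n0 | (o < k + e)%N]| <=
              #|[set j in S | (u *m lrc_mx) 0%R j != 0%R]|)%N.
  rewrite -(card_imset _ (can_inj (src_copy_ord i'))).
  apply/subset_leq_card/subsetP => _ /imsetP[o + ->]; rewrite !inE => /andP[wo oe].
  have jS : in_group g (copy_ord i' o).
    apply: copy_nat_group => // ok.
    move: wo; rewrite (systematic_mul_info sysG0 v ok) mxE.
    by case: ifP => [/eqP og _ | _]; [exact: og | rewrite eqxx].
  by rewrite jS cE ?inE // src_copy_ord.
by move=> hd; apply: leq_trans front_wt; lia.
Qed.

Lemma lrc_mx_rdelta_i_code : rdelta_i_code lrc_mx d r delta.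
Proof.
split; last exact: lrc_mx_locality.
split; [|exact: lrc_mx_systematic|exact: lrc_mx_min_dist].
exact: (systematic_row_free lrc_mx_systematic k_le_n).
Qed.

End Construction.

End LocalGroups.

Theorem mainTheorem6 (F : finFieldType) (k d r delta : nat) :
  (0 < k)%N -> (0 < d)%N -> (0 < r)%N -> (0 < delta)%N -> (delta <= d)%N ->
  (exists G : 'M[F]_(k, k + d - 1), systematic_code G d) ->
  exists G : 'M[F]_(k, k + d - 1 + (ceil_div k r - 1) * (delta - 1)),
    rdelta_i_code G d r delta.
Proof.
move=> k_gt0 d_gt0 r_gt0 delta_gt0 delta_le_d [G0 [_ sysG0 [_ G0_wt]]].
by exists (lrc_mx k_gt0 d_gt0 r_gt0 delta_gt0 delta_le_d G0); apply: lrc_mx_rdelta_i_code.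
Qed.
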